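(* Let $v\in S$ be a point with at least one irrational coordinate, and suppose there is $m\ge1$ such that the tail $\mathbb{X}_{a_m},\mathbb{X}_{a_{m+1}},\dots$ of its itinerary has the property that its non-$\mathbb{A}$-type symbols alternate in type between $\mathbb{B}$ and $\mathbb{C}$ (starting with either type, or there are none). Then $G^{m-1}(v)$ lies in the union of the faces $\{z=0\}$ and $\{y=z\}$ of $S$.
   Context: Let $S = \{(x,y,z)\in\mathbb{R}^3 : 0\le z\le y\le x\le 1\}$. For integers $n\ge1$ define $\mathbb{A}_n = \{\frac1{n+1} < x \le \frac1n,\ 0\le z\le y\le 1-nx\}$, $\mathbb{B}_n = \{0\le z\le 1-nx < y \le x\}$, $\mathbb{C}_n = \{1-nx < z \le y \le x \le \frac1n\}$; together with $\{(0,0,0)\}$ they partition $S$. The 3-dimensional Gauss map $G:S\to S$ is $G(0,0,0)=(0,0,0)$, $G(x,y,z)=\left(\frac1x-n,\frac yx,\frac zx\right)$ on $\mathbb{A}_n$, $G(x,y,z)=\left(\frac{1-y}{x}-n+1,\frac{x-y+z}{x},\frac{x-y}{x}\right)$ on $\mathbb{B}_n$, $G(x,y,z)=\left(\frac{1-z}{x}-n+1,\frac{x-z}{x},\frac{y-z}{x}\right)$ on $\mathbb{C}_n$. For a point $v$ whose forward orbit never hits the origin, its itinerary is the sequence $\mathbb{X}_{a_1},\mathbb{X}_{a_2},\dots$ ($\mathbb{X}\in\{\mathbb{A},\mathbb{B},\mathbb{C}\}$) with $G^{k-1}(v)\in\mathbb{X}_{a_k}$; a symbol $\mathbb{X}_a$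 is ''of type $\mathbb{X}$''. *)

From Stdlib Require Import Reals Lra QArith Qreals ClassicalEpsilon.
Open Scope R_scope.

Record pt := mkpt { px : R; py : R; pz : R }.

Definition origin : pt := mkpt 0 0 0.

Definition inS (p : pt) : Prop :=
  0 <= pz p /\ pz p <= py p /\ py p <= px p /\ px p <= 1.

Definition inA (n : nat) (p : pt) : Prop :=
  (1 <= n)%nat /\ inS p /\
  1 / INR (S n) < px p /\ px p <= 1 / INR n /\
  0 <= pz p /\ pz p <= py p /\ py p <= 1 - INR n * px p.

Definition inB (n : nat) (p : pt) : Prop :=
  (1 <= n)%nat /\ inS p /\
  0 <= pz p /\ pz p <= 1 - INR n * px p /\
  1 - INR n * px p < py p /\ py p <= px p.

Definition inC (n : nat) (p : pt) : Prop :=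
  (1 <= n)%nat /\ inS p /\
  1 - INR n * px p < pz p /\ pz p <= py p /\ py p <= px p /\
  px p <= 1 / INR n.

Definition G_rel (p q : pt) : Prop :=
  (p = origin /\ q = origin) \/
  (exists n, inA n p /\
     q = mkpt (1 / px p - INR n) (py p / px p) (pz p / px p)) \/
  (exists n, inB n p /\
     q = mkpt ((1 - py p) / px p - INR n + 1)
              ((px p - py p + pz p) / px p)
              ((px p - py p) / px p)) \/
  (exists n, inC n p /\
     q = mkpt ((1 - pz p) / px p - INR n + 1)
              ((px p - pz p) / px p)
              ((py p - pz p) / px p)).

(* G p := the (unique, since A_n, B_n, C_n, {0} partition S) image of p.
   Outside S the value is irrelevant. *)
Definition G (p : pt) : pt :=
  epsilon (inhabits origin) (fun q => G_rel p q).

Definition Giter (k : nat) (v : pt) : pt := Nat.iter k G v.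

Definition typeA (p : pt) : Prop := exists n, inA n p.
Definition typeB (p : pt) : Prop := exists n, inB n p.
Definition typeC (p : pt) : Prop := exists n, inC n p.

Definition irrational (r : R) : Prop := ~ exists q : Q, Q2R q = r.

(* The tail of the itinerary starting at index m (symbols X_{a_m}, X_{a_{m+1}}, ...,
   i.e. the points G^{k}(v) for k >= m-1) has its non-A-type symbols alternating
   between types B and C: any two consecutive non-A symbols have different types. *)
Definition tail_alternates (v : pt) (m : nat) : Prop :=
  forall i j : nat, (m - 1 <= i)%nat -> (i < j)%nat ->
    (forall l, (i < l < j)%nat -> typeA (Giter l v)) ->
    ((typeB (Giter i v) /\ typeB (Giter j v)) -> False) /\
    ((typeC (Giter i v) /\ typeC (Giter j v)) -> False).

(* Write the orbit as p_0, p_1, ... and let w_k = x_0 x_1 ... x_(k-1).  The rescaled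
   gaps Z_k = w_k z_k and W_k = w_k (y_k - z_k) are preserved by an A-step, a B-step
   sets W_(k+1) = Z_k and a C-step sets Z_(k+1) = W_k.  If B- and C-steps alternate,
   one of the two gaps therefore stays at least c = min(Z_0, W_0) forever.  On the
   other hand x_k x_(k+1) <= 1 - z_k in every region, so w_(k+2) <= w_k - Z_k, and
   also w_(k+2) <= w_k - W_k unless step k is a C-step, in which case
   Z_(k+1) = W_k.  Hence w drops by c every three steps, which the positive weights
   cannot do forever unless c = 0. *)

From Stdlib Require Import Reals QArith Qreals.
From Stdlib Require Import Lra Lia Psatz ZArith ClassicalEpsilon.
Open Scope R_scope.

Lemma Rdiv_1_lt_iff (a x : R) : 0 < a -> (1 / a < x <-> 1 < a * x).
Proof. intros Ha. assert (a * (1 / a) = 1) by (field; lra). split; nra. Qed.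

Lemma Rle_div_1_iff (a x : R) : 0 < a -> (x <= 1 / a <-> a * x <= 1).
Proof. intros Ha. assert (a * (1 / a) = 1) by (field; lra). split; nra. Qed.

Lemma INR_ge1 (n : nat) : (1 <= n)%nat -> 1 <= INR n.
Proof. intros Hn. apply (le_INR 1 n) in Hn. exact Hn. Qed.

Lemma px_pos (p : pt) : inS p -> p <> origin -> 0 < px p.
Proof.
  destruct p as [x y z]; intros (Hz & Hzy & Hyx & _) Hne; simpl in *.
  destruct (Req_dec x 0) as [->|]; [|lra].
  exfalso; apply Hne; unfold origin; f_equal; lra.
Qed.

Lemma inS_cover (p : pt) : inS p -> p <> origin ->
  exists n, inA n p \/ inB n p \/ inC n p.
Proof.
  intros HS Hne; pose proof (px_pos p HS Hne) as Hx.
  destruct p as [x y z]; pose proof HS as (Hz & Hzy & Hyx & Hx1); simpl in *.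
  destruct (archimed (1 / x)) as [Hup Hup1].
  assert (Hinv : 1 <= 1 / x) by (apply Rle_div_1_iff; lra).
  assert (Hk : (1 < up (1 / x))%Z) by (apply lt_IZR; lra).
  set (n := Z.to_nat (up (1 / x) - 1)).
  assert (HN : INR n = IZR (up (1 / x)) - 1).
  { unfold n; rewrite INR_IZR_INZ, Z2Nat.id, minus_IZR by lia; reflexivity. }
  assert (Hn : (1 <= n)%nat) by (unfold n; lia).
  pose proof (INR_ge1 n Hn) as Hn1.
  assert (Hxinv : x * (1 / x) = 1) by (field; lra).
  assert (HxN : INR n * x <= 1) by nra.
  assert (HxSN : 1 / INR (S n) < x) by (rewrite S_INR; apply Rdiv_1_lt_iff; nra).
  assert (HxN' : x <= 1 / INR n) by (apply Rle_div_1_iff; lra).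
  exists n; unfold inA, inB, inC; simpl.
  destruct (Rle_dec y (1 - INR n * x)); [left; repeat split; auto; lra|right].
  destruct (Rle_dec z (1 - INR n * x)); [left|right]; repeat split; auto; lra.
Qed.

Definition gauss_step (p q : pt) : Prop :=
  (typeA p /\ px p * px q <= 1 - px p /\ px p * pz q = pz p /\
     px p * (py q - pz q) = py p - pz p) \/
  (typeB p /\ px p * px q <= 1 - py p /\ px p * (py q - pz q) = pz p) \/
  (typeC p /\ px p * px q <= 1 - pz p /\ px p * pz q = py p - pz p).

Lemma inS_of_scaled (x : R) (q : pt) : 0 < x ->
  0 <= x * pz q -> x * pz q <= x * py q -> x * py q <= x * px q -> x * px q <= x ->
  inS q.
Proof. intros; repeat split; nra. Qed.

Lemma gauss_step_A n p q : inA n p ->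
  q = mkpt (1 / px p - INR n) (py p / px p) (pz p / px p) -> inS q /\ gauss_step p q.
Proof.
  intros HA ->; pose proof HA as (Hn & _ & Hlo & _ & Hz & Hzy & Hy).
  destruct p as [x y z]; cbn [px py pz] in *.
  pose proof (INR_ge1 n Hn) as HN.
  apply Rdiv_1_lt_iff in Hlo; [rewrite S_INR in Hlo|rewrite S_INR; lra].
  assert (Hx : 0 < x) by nra.
  assert (Ex : x * (1 / x - INR n) = 1 - INR n * x) by (field; lra).
  assert (Ey : x * (y / x) = y) by (field; lra).
  assert (Ez : x * (z / x) = z) by (field; lra).
  split; [apply (inS_of_scaled x); simpl; lra|].
  left; simpl; repeat split; [exists n; exact HA|nra|lra|rewrite Rmult_minus_distr_l; lra].
Qed.

Lemma gauss_step_B n p q : inB n p ->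
  q = mkpt ((1 - py p) / px p - INR n + 1) ((px p - py p + pz p) / px p)
           ((px p - py p) / px p) ->
  inS q /\ gauss_step p q.
Proof.
  intros HB ->; pose proof HB as (Hn & _ & Hz & Hzn & Hny & Hy).
  destruct p as [x y z]; cbn [px py pz] in *.
  pose proof (INR_ge1 n Hn) as HN.
  assert (Hx : 0 < x) by nra.
  assert (Ex : x * ((1 - y) / x - INR n + 1) = 1 - y - INR n * x + x) by (field; lra).
  assert (Ey : x * ((x - y + z) / x) = x - y + z) by (field; lra).
  assert (Ez : x * ((x - y) / x) = x - y) by (field; lra).
  split; [apply (inS_of_scaled x); simpl; nra|].
  right; left; simpl; rewrite Rmult_minus_distr_l; repeat split; [exists n; exact HB|nra..].
Qed.

Lemma gauss_step_C n p q : inC n p ->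
  q = mkpt ((1 - pz p) / px p - INR n + 1) ((px p - pz p) / px p)
           ((py p - pz p) / px p) ->
  inS q /\ gauss_step p q.
Proof.
  intros HC ->; pose proof HC as (Hn & _ & Hnz & Hzy & Hy & Hhi).
  destruct p as [x y z]; cbn [px py pz] in *.
  pose proof (INR_ge1 n Hn) as HN.
  assert (Hx : 0 < x) by nra.
  apply Rle_div_1_iff in Hhi; [|lra].
  assert (Ex : x * ((1 - z) / x - INR n + 1) = 1 - z - INR n * x + x) by (field; lra).
  assert (Ey : x * ((x - z) / x) = x - z) by (field; lra).
  assert (Ez : x * ((y - z) / x) = y - z) by (field; lra).
  split; [apply (inS_of_scaled x); simpl; nra|].
  right; right; simpl; repeat split; [exists n; exact HC|nra..].
Qed.

Lemma G_step (p : pt) : inS p -> p <> origin -> inS (G p) /\ gauss_step p (G p).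
Proof.
  intros HS Hne.
  assert (HG : G_rel p (G p)).
  { unfold G; apply epsilon_spec.
    destruct (inS_cover p HS Hne) as [n [H|[H|H]]]; eexists.
    - right; left; exists n; split; [exact H|reflexivity].
    - right; right; left; exists n; split; [exact H|reflexivity].
    - right; right; right; exists n; split; [exact H|reflexivity]. }
  destruct HG as [[-> _]|[[n [H E]]|[[n [H E]]|[n [H E]]]]].
  - contradiction.
  - exact (gauss_step_A n p _ H E).
  - exact (gauss_step_B n p _ H E).
  - exact (gauss_step_C n p _ H E).
Qed.

Lemma Giter_inS (v : pt) : inS v -> (forall k, Giter k v <> origin) ->
  forall k, inS (Giter k v).
Proof.
  intros HS Hne; induction k as [|k IH]; [exact HS|].
  exact (proj1 (G_step _ IH (Hne k))).
Qed.

Section Orbit.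

Variable p : nat -> pt.
Hypothesis p_inS : forall k, inS (p k).
Hypothesis p_px_pos : forall k, 0 < px (p k).
Hypothesis p_step : forall k, gauss_step (p k) (p (S k)).

Fixpoint weight (k : nat) : R :=
  match k with O => 1 | S k => weight k * px (p k) end.

Definition zgap (k : nat) : R := weight k * pz (p k).
Definition yzgap (k : nat) : R := weight k * (py (p k) - pz (p k)).

Lemma weight_pos k : 0 < weight k.
Proof. induction k as [|k IH]; simpl; [lra|]. pose proof (p_px_pos k); nra. Qed.

Lemma weight_S_le k : weight (S k) <= weight k.
Proof.
  simpl; pose proof (weight_pos k); destruct (p_inS k) as (_ & _ & _ & Hx1); nra.
Qed.

Lemma gap_step k :
  (typeA (p k) /\ zgap (S k) = zgap k /\ yzgap (S k) = yzgap k) \/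
  (typeB (p k) /\ yzgap (S k) = zgap k) \/
  (typeC (p k) /\ zgap (S k) = yzgap k).
Proof.
  unfold zgap, yzgap; simpl; rewrite !Rmult_assoc.
  destruct (p_step k) as [(? & _ & -> & ->)|[(? & _ & ->)|(? & _ & ->)]]; auto.
Qed.

Lemma weight_SS_le_zgap k : weight (S (S k)) <= weight k - zgap k.
Proof.
  unfold zgap; simpl; rewrite Rmult_assoc.
  assert (Hxx : px (p k) * px (p (S k)) <= 1 - pz (p k)).
  { destruct (p_inS k) as (_ & Hzy & Hyx & _).
    destruct (p_step k) as [(_ & H & _)|[(_ & H & _)|(_ & H & _)]]; lra. }
  pose proof (weight_pos k); nra.
Qed.

Lemma weight_SS_le_yzgap k :
  weight (S (S k)) <= weight k - yzgap k \/ zgap (S k) = yzgap k.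
Proof.
  destruct (p_inS k) as (Hz & _ & Hyx & _); pose proof (weight_pos k).
  unfold yzgap, zgap; simpl; rewrite !Rmult_assoc.
  destruct (p_step k) as [(_ & Hxx & _)|[(_ & Hxx & _)|(_ & _ & E)]];
    [left; nra|left; nra|right; rewrite E; reflexivity].
Qed.

Lemma weight_SSS_le c k : c <= zgap k \/ c <= yzgap k ->
  weight (S (S (S k))) <= weight k - c.
Proof.
  pose proof (weight_S_le k); pose proof (weight_S_le (S (S k))).
  pose proof (weight_SS_le_zgap k); pose proof (weight_SS_le_zgap (S k)).
  intros [Hc|Hc]; [lra|].
  destruct (weight_SS_le_yzgap k) as [Hw|Hw]; lra.
Qed.

Lemma gap_lower_bound_absurd c : 0 < c ->
  (forall k, c <= zgap k \/ c <= yzgap k) -> False.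
Proof.
  intros Hc Hgap.
  assert (Hlin : forall j, weight (3 * j) <= 1 - INR j * c).
  { induction j as [|j IH]; [simpl; lra|].
    replace (3 * S j)%nat with (S (S (S (3 * j)))) by lia.
    rewrite S_INR; pose proof (weight_SSS_le c _ (Hgap (3 * j)%nat)); lra. }
  destruct (archimed_cor1 c Hc) as [N [HN HN0]].
  assert (HNpos : 0 < INR N) by (apply lt_0_INR; lia).
  assert (INR N * / INR N = 1) by (field; lra).
  pose proof (Hlin N); pose proof (weight_pos (3 * N)); nra.
Qed.

Definition last_nonA_is (P : pt -> Prop) (k : nat) : Prop :=
  exists i, (i < k)%nat /\ P (p i) /\ forall l, (i < l < k)%nat -> typeA (p l).

Lemma last_nonA_is_self (P : pt -> Prop) k : P (p k) -> last_nonA_is P (S k).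
Proof. intros H; exists k; split; [lia|split; [exact H|intros; lia]]. Qed.

Lemma last_nonA_is_A (P : pt -> Prop) k :
  typeA (p k) -> last_nonA_is P k -> last_nonA_is P (S k).
Proof.
  intros HA (i & Hi & HP & Hl); exists i; split; [lia|split; [exact HP|]].
  intros l Hl'; destruct (Nat.eq_dec l k) as [->|]; [exact HA|apply Hl; lia].
Qed.

Hypothesis p_alternates : forall i j, (i < j)%nat ->
  (forall l, (i < l < j)%nat -> typeA (p l)) ->
  ~ (typeB (p i) /\ typeB (p j)) /\ ~ (typeC (p i) /\ typeC (p j)).

Lemma gap_invariant c : c <= zgap 0 -> c <= yzgap 0 -> forall k,
  (c <= zgap k /\ c <= yzgap k) \/
  (c <= zgap k /\ last_nonA_is typeC k) \/
  (c <= yzgap k /\ last_nonA_is typeB k).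
Proof.
  intros Hz Hw; induction k as [|k IH]; [left; split; assumption|].
  destruct (gap_step k) as [(HA & Ez & Ew)|[(HB & Ew)|(HC & Ez)]].
  - rewrite Ez, Ew.
    destruct IH as [?|[(? & ?)|(? & ?)]]; [left|right; left|right; right];
      intuition auto using last_nonA_is_A.
  - rewrite Ew; right; right; split; [|exact (last_nonA_is_self _ _ HB)].
    destruct IH as [(? & _)|[(? & _)|(_ & i & Hi & HBi & Hl)]]; try assumption.
    exfalso; exact (proj1 (p_alternates i k Hi Hl) (conj HBi HB)).
  - rewrite Ez; right; left; split; [|exact (last_nonA_is_self _ _ HC)].
    destruct IH as [(_ & ?)|[(_ & i & Hi & HCi & Hl)|(? & _)]]; try assumption.
    exfalso; exact (proj2 (p_alternates i k Hi Hl) (conj HCi HC)).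
Qed.

Lemma orbit_on_faces : pz (p 0) = 0 \/ py (p 0) = pz (p 0).
Proof.
  destruct (p_inS 0) as (Hz & Hzy & _).
  destruct (Req_dec (pz (p 0)) 0) as [|Hz0]; [left; assumption|].
  destruct (Req_dec (py (p 0)) (pz (p 0))) as [|Hw0]; [right; assumption|].
  exfalso.
  set (c := Rmin (pz (p 0)) (py (p 0) - pz (p 0))).
  apply (gap_lower_bound_absurd c); [apply Rmin_glb_lt; lra|].
  assert (Hc : c <= zgap 0 /\ c <= yzgap 0).
  { unfold zgap, yzgap; simpl; rewrite !Rmult_1_l; split; [apply Rmin_l|apply Rmin_r]. }
  intros k; destruct (gap_invariant c (proj1 Hc) (proj2 Hc) k) as [[]|[[]|[]]]; auto.
Qed.

End Orbit.

Theorem mainTheorem17 (v : pt) (m : nat) :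
  inS v ->
  (irrational (px v) \/ irrational (py v) \/ irrational (pz v)) ->
  (forall k : nat, Giter k v <> origin) ->
  (1 <= m)%nat ->
  tail_alternates v m ->
  pz (Giter (m - 1) v) = 0 \/ py (Giter (m - 1) v) = pz (Giter (m - 1) v).
Proof.
  intros HS _ Hne _ Halt.
  pose proof (Giter_inS v HS Hne) as HSk.
  apply (orbit_on_faces (fun k => Giter (k + (m - 1)) v)).
  - intro k; apply HSk.
  - intro k; apply px_pos; auto.
  - intro k; exact (proj2 (G_step _ (HSk _) (Hne _))).
  - intros i j Hij Hl; apply (Halt (i + (m - 1))%nat (j + (m - 1))%nat); try lia.
    intros l Hl'; replace l with (l - (m - 1) + (m - 1))%nat by lia; apply Hl; lia.
Qed.
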